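(* Let $C_T$ be the following class of four continuous maps of finite topological spaces: the constant map $\{a\leftrightarrow b\}\to\{*\}$; the constant map $\{a\searrow b\}\to\{*\}$; the inclusion $\{b\}\to\{a\searrow b\}$ of the closed point; and the constant map $\{a\swarrow o\searrow b\}\to\{*\}$. Then a Hausdorff topological space $K$ is compact iff the map $K\to\{*\}$ lies in $C_T^{lr}$.
   Context: For morphisms $f:A\to B$ and $g:X\to Y$ in a category, write $f\rightthreetimes g$ (''$f$ has the left lifting property with respect to $g$'') if for all morphisms $i:A\to X$, $j:B\to Y$ with $g\circ i=j\circ f$ there exists a morphism $h:B\to X$ with $h\circ f=i$ and $g\circ h=j$. For a class $C$ of morphisms, $C^l=\{f:\ f\rightthreetimes g\text{ for all }g\in C\}$, $C^r=\{g:\ f\rightthreetimes g\text{ for all }f\in C\}$, $C^{lr}=(C^l)^r$. Finite spaces: $\{*\}$ one point; $\{a\leftrightarrow b\}$ the antidiscrete two-point space; $\{a\searrow b\}$ the Sierpiński space with open sets $\emptyset,\{a\},\{a,b\}$; $\{a\swarrow o\searrow b\}$ the three-point space with points $a,o,b$ and open sets $\emptyset,\{o\},\{o,a\},\{o,b\},\{a,o,b\}$ (so $o$ is open and $a,b$ are closed points in the closure of $o$). *)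

From Stdlib Require Import List Classical.

Record Top := {
  carrier :> Type;
  is_open : (carrier -> Prop) -> Prop;
  open_ext : forall U V : carrier -> Prop,
      is_open U -> (forall x, U x <-> V x) -> is_open V;
  open_full : is_open (fun _ => True);
  open_inter : forall U V, is_open U -> is_open V -> is_open (fun x => U x /\ V x);
  open_union : forall S : (carrier -> Prop) -> Prop,
      (forall U, S U -> is_open U) -> is_open (fun x => exists U, S U /\ U x)
}.

Arguments is_open {t} _.

Lemma open_empty (X : Top) : is_open (fun _ : X => False).
Proof.
  apply (open_ext X (fun x => exists U, (fun _ : X -> Prop => False) U /\ U x)).
  - apply open_union. intros U [].
  - intros x; split; [intros [U [[] _]] | intros []].
Qed.

Lemma open_const (X : Top) (P : Prop) : is_open (fun _ : X => P).
Proof.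
  apply (open_ext X (fun x => exists U, (fun U : X -> Prop => P /\ forall y, U y) U /\ U x)).
  - apply open_union. intros U [_ HU]. apply (open_ext X (fun _ => True)).
    + apply open_full.
    + intros y; split; auto.
  - intros x; split.
    + intros [U [[HP _] _]]; exact HP.
    + intros HP. exists (fun _ => True). split; auto.
Qed.

Record cmap (A B : Top) := {
  fn :> A -> B;
  cont : forall U : B -> Prop, is_open U -> is_open (fun x => U (fn x))
}.

Arguments fn {A B} _ _.

Definition llp {A B X Y : Top} (f : cmap A B) (g : cmap X Y) : Prop :=
  forall (i : cmap A X) (j : cmap B Y),
    (forall a, g (i a) = j (f a)) ->
    exists h : cmap B X, (forall a, h (f a) = i a) /\ (forall b, g (h b) = j b).

Definition MorClass := forall A B : Top, cmap A B -> Prop.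

Definition lclass (C : MorClass) : MorClass :=
  fun A B f => forall X Y (g : cmap X Y), C X Y g -> llp f g.
Definition rclass (C : MorClass) : MorClass :=
  fun X Y g => forall A B (f : cmap A B), C A B f -> llp f g.
Definition lrclass (C : MorClass) : MorClass := rclass (lclass C).

Definition pt : Top.
Proof.
  refine {| carrier := unit; is_open := fun _ => True |}; auto.
Defined.

Inductive two := ta | tb.

Definition adisc : Top.
Proof.
  refine {| carrier := two;
            is_open := fun U => (forall x, U x) \/ (forall x, ~ U x) |}.
  - intros U V [H|H] E; [left|right]; intros x; firstorder.
  - left; auto.
  - intros U V [HU|HU] [HV|HV]; [left|right|right|right]; firstorder.
  - intros S HS. destruct (classic (exists U, S U /\ exists x, U x))
      as [[U [SU [x Ux]]]|N].
    + left. intros y. exists U. split; auto.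
      destruct (HS U SU) as [H|H]; [auto| exfalso; exact (H x Ux)].
    + right. intros y [U [SU Uy]]. apply N. eauto.
Defined.

(* {a ↘ b} : Sierpinski space, open sets ∅, {a}, {a,b} *)
Definition sierp : Top.
Proof.
  refine {| carrier := two; is_open := fun U => U tb -> U ta |}.
  - intros U V H E Hb. apply E, H, E, Hb.
  - auto.
  - intros U V HU HV [Ub Vb]; auto.
  - intros S HS [U [SU Ub]]. exists U. split; auto. apply (HS U SU Ub).
Defined.

(* {a ↙ o ↘ b} : open sets ∅, {o}, {o,a}, {o,b}, {a,o,b} *)
Inductive three := pa | po | pb.

Definition vspace : Top.
Proof.
  refine {| carrier := three; is_open := fun U => (U pa \/ U pb) -> U po |}.
  - intros U V H E Hab. apply E, H. destruct Hab as [h|h]; [left|right]; apply E, h.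
  - auto.
  - intros U V HU HV [[Ua Va]|[Ub Vb]]; auto.
  - intros S HS [[U [SU Ua]]|[U [SU Ub]]]; exists U; split; auto; apply (HS U SU); auto.
Defined.

Definition to_pt (X : Top) : cmap X pt.
Proof. refine {| fn := (fun _ => tt : carrier pt) |}. intros U _. apply open_const. Defined.

Definition incl_b : cmap pt sierp.
Proof. refine {| fn := (fun _ => tb : carrier sierp) |}. intros U _. exact I. Defined.

Inductive C_T : MorClass :=
| CT_adisc : C_T adisc pt (to_pt adisc)
| CT_sierp : C_T sierp pt (to_pt sierp)
| CT_incl  : C_T pt sierp incl_b
| CT_vspace : C_T vspace pt (to_pt vspace).

Definition hausdorff (X : Top) : Prop :=
  forall x y : X, x <> y ->
    exists U V : X -> Prop, is_open U /\ is_open V /\ U x /\ V y /\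
      (forall z, U z -> V z -> False).

Definition compact (X : Top) : Prop :=
  forall S : (X -> Prop) -> Prop,
    (forall U, S U -> is_open U) ->
    (forall x, exists U, S U /\ U x) ->
    exists l : list (X -> Prop),
      (forall U, In U l -> S U) /\ (forall x, exists U, In U l /\ U x).

From Stdlib Require Import List Classical ClassicalEpsilon.
From mathcomp Require Import classical_sets filter.

(* Lifting against the maps of [C_T] says that a map [f : A -> B] of [C_T^l] has dense
   image (against [incl_b]) and that every cover of [A] by two open sets is the trace
   along [f] of such a cover of [B] (against [vspace -> pt]).  For [K] compact Hausdorff
   and [i : A -> K] this is what it takes to extend [i] along [f]: near each [b] the
   values of [i] cluster at a unique point, and regularity of [K] together with the
   extension of covers makes the extension continuous.
   Conversely, if an open cover of [K] has no finite subcover, take an ultrafilter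
   containing the complements of its members and adjoin to [K] a point whose
   neighbourhoods are the traces in the ultrafilter.  The inclusion lies in [C_T^l],
   but a retraction onto [K] sends the new point into a member of the cover, which
   then has to belong to the ultrafilter as well as its complement. *)

Lemma open_of_local (X : Top) (W : X -> Prop) :
  (forall x, W x -> exists U, is_open U /\ U x /\ forall y, U y -> W y) -> is_open W.
Proof.
  intros HW.
  apply (open_ext X
           (fun x => exists U, (fun U => is_open U /\ forall y, U y -> W y) U /\ U x)).
  - apply open_union. intros U [HU _]; exact HU.
  - intros x; split.
    + intros [U [[_ HUW] Ux]]; exact (HUW x Ux).
    + intros Wx. destruct (HW x Wx) as [U [HU [Ux HUW]]]. exists U; auto.
Qed.

Lemma open_of_full (X : Top) (W : X -> Prop) : (forall x, W x) -> is_open W.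
Proof. intros HW. apply (open_ext X (fun _ => True)); [apply open_full | firstorder]. Qed.

Lemma open_of_empty (X : Top) (W : X -> Prop) : (forall x, ~ W x) -> is_open W.
Proof. intros HW. apply (open_ext X (fun _ => False)); [apply open_empty | firstorder]. Qed.

Lemma open_nbhd_forall_list (X : Top) (T : Type) (R : T -> (X -> Prop) -> Prop)
    (x : X) (l : list T) :
  (forall t V V', (forall y, V' y -> V y) -> R t V -> R t V') ->
  (forall t, In t l -> exists V, is_open V /\ V x /\ R t V) ->
  exists V, is_open V /\ V x /\ forall t, In t l -> R t V.
Proof.
  intros Hmono; induction l as [|t l IH]; intros Hl.
  - exists (fun _ => True). split; [apply open_full|]. split; [exact I|]. intros t [].
  - destruct (Hl t (or_introl eq_refl)) as [V1 [HV1 [V1x R1]]].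
    destruct IH as [V2 [HV2 [V2x R2]]]; [intros s Hs; apply Hl; right; exact Hs|].
    exists (fun y => V1 y /\ V2 y). split; [apply open_inter; assumption|].
    split; [split; assumption|].
    intros s [<-|Hs].
    + apply (Hmono t V1); [intros y [Hy _]; exact Hy | exact R1].
    + apply (Hmono s V2); [intros y [_ Hy]; exact Hy | exact (R2 s Hs)].
Qed.

Definition cmap_id (X : Top) : cmap X X := {| fn := fun x => x; cont := fun U HU => HU |}.

Definition adisc_map (X : Top) (g : X -> two) : cmap X adisc.
Proof.
  refine {| fn := (g : X -> adisc) |}.
  intros U [HU|HU]; [apply open_of_full | apply open_of_empty]; intros x; apply HU.
Defined.

Definition sierp_map (X : Top) (g : X -> two) (Hg : is_open (fun x => g x = ta)) :
  cmap X sierp.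
Proof.
  refine {| fn := (g : X -> sierp) |}.
  intros U HU; simpl in HU.
  destruct (classic (U tb)) as [Ub|nUb]; [|destruct (classic (U ta)) as [Ua|nUa]].
  - apply open_of_full. intros x. destruct (g x); auto.
  - apply (open_ext _ _ _ Hg). intros x. destruct (g x); split; intros H; congruence.
  - apply open_of_empty. intros x. destruct (g x); assumption.
Defined.

Definition vspace_map (X : Top) (g : X -> three)
    (Hpa : is_open (fun x => g x <> pb)) (Hpb : is_open (fun x => g x <> pa)) :
  cmap X vspace.
Proof.
  refine {| fn := (g : X -> vspace) |}.
  intros U HU; simpl in HU.
  destruct (classic (U po)) as [Uo|nUo];
    [|apply open_of_empty; intros x; destruct (g x); tauto].
  destruct (classic (U pa)) as [Ua|nUa]; destruct (classic (U pb)) as [Ub|nUb].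
  - apply open_of_full. intros x. destruct (g x); assumption.
  - apply (open_ext _ _ _ Hpa). intros x. destruct (g x); split; intros H; congruence.
  - apply (open_ext _ _ _ Hpb). intros x. destruct (g x); split; intros H; congruence.
  - apply (open_ext _ _ _ (open_inter _ _ _ Hpa Hpb)).
    intros x. destruct (g x); split; intros H; try split; try congruence; tauto.
Defined.

Lemma lclass_dense (A B : Top) (f : cmap A B) : lclass C_T A B f ->
  forall V : B -> Prop, is_open V -> forall b, V b -> exists a, V (f a).
Proof.
  intros Hf V HV b Vb. apply NNPP. intros Hmiss.
  set (g := fun y => if excluded_middle_informative (V y) then ta else tb).
  assert (Hg : is_open (fun y => g y = ta)).
  { apply (open_ext _ _ _ HV). intros y. unfold g.
    destruct (excluded_middle_informative (V y)); split; intros H; congruence. }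
  (* [g] is [tb] on the image of [f] but not at [b]: it does not factor through [incl_b]. *)
  destruct (Hf pt sierp incl_b CT_incl (to_pt A) (sierp_map B g Hg)) as [h [_ Hh]].
  - intros a. simpl. unfold g.
    destruct (excluded_middle_informative (V (f a))); [exfalso; eauto | reflexivity].
  - specialize (Hh b). simpl in Hh. unfold g in Hh.
    destruct (excluded_middle_informative (V b)); [discriminate | contradiction].
Qed.

Lemma lclass_split_cover (A B : Top) (f : cmap A B) : lclass C_T A B f ->
  forall O1 O2 : A -> Prop, is_open O1 -> is_open O2 -> (forall a, O1 a \/ O2 a) ->
  exists P1 P2 : B -> Prop, is_open P1 /\ is_open P2 /\ (forall b, P1 b \/ P2 b) /\
    (forall a, P1 (f a) -> O1 a) /\ (forall a, P2 (f a) -> O2 a).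
Proof.
  intros Hf O1 O2 H1 H2 Hcov.
  set (g := fun a => if excluded_middle_informative (O1 a) then
                       if excluded_middle_informative (O2 a) then po else pa
                     else pb).
  assert (Hg1 : forall a, g a <> pb <-> O1 a).
  { intros a. unfold g. destruct (excluded_middle_informative (O1 a));
      [destruct (excluded_middle_informative (O2 a))|];
      split; intros; first [congruence | tauto]. }
  assert (Hg2 : forall a, g a <> pa <-> O2 a).
  { intros a. unfold g. destruct (Hcov a); destruct (excluded_middle_informative (O1 a));
      try destruct (excluded_middle_informative (O2 a));
      split; intros; first [congruence | tauto]. }
  set (i := vspace_map A g (open_ext _ _ _ H1 (fun a => iff_sym (Hg1 a)))
                           (open_ext _ _ _ H2 (fun a => iff_sym (Hg2 a)))).
  destruct (Hf vspace pt (to_pt vspace) CT_vspace i (to_pt B) (fun _ => eq_refl))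
    as [h [Hh _]].
  exists (fun b => h b <> pb), (fun b => h b <> pa).
  split; [apply (cont _ _ h (fun t => t <> pb)); intros _; discriminate|].
  split; [apply (cont _ _ h (fun t => t <> pa)); intros _; discriminate|].
  split; [intros b; destruct (fn h b); [left|left|right]; discriminate|].
  split; intros a; rewrite Hh; [apply Hg1 | apply Hg2].
Qed.

Lemma compact_hausdorff_regular (K : Top) : hausdorff K -> compact K ->
  forall (k : K) (W : K -> Prop), is_open W -> W k ->
  exists V C : K -> Prop, is_open V /\ is_open C /\ V k /\
    (forall z, V z -> C z -> False) /\ (forall z, W z \/ C z).
Proof.
  intros HK Hc k W HW Wk.
  set (S := fun U : K -> Prop => U = W \/ is_open U /\
              exists V, is_open V /\ V k /\ forall z, U z -> V z -> False).
  destruct (Hc S) as [l [Hl Hcl]].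
  - intros U [->|[HU _]]; assumption.
  - intros z. destruct (classic (W z)) as [Wz|nWz]; [exists W; split; [left|]; auto|].
    destruct (HK z k) as [U [V [HU [HV [Uz [Vk Hd]]]]]]; [intros ->; contradiction|].
    exists U. split; [right; split; [exact HU | exists V; auto] | exact Uz].
  - destruct (open_nbhd_forall_list K (K -> Prop)
                (fun U V => U = W \/ forall z, U z -> V z -> False) k l)
      as [V [HV [Vk HVl]]].
    + intros U V V' Hsub [E|Hd]; [left; exact E | right; eauto].
    + intros U HU. destruct (Hl U HU) as [E|[_ [V [HV [Vk Hd]]]]].
      * exists (fun _ => True). split; [apply open_full|]. split; [exact I | left; exact E].
      * exists V; auto.
    + set (C := fun z => exists U,
                  (fun U => is_open U /\ forall y, U y -> V y -> False) U /\ U z).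
      exists V, C. split; [exact HV|].
      split; [apply open_union; intros U [HU _]; exact HU|].
      split; [exact Vk|]. split.
      * intros z Vz [U [[_ Hd] Uz]]. exact (Hd z Uz Vz).
      * intros z. destruct (Hcl z) as [U [Ul Uz]].
        destruct (HVl U Ul) as [->|Hd]; [left; exact Uz | right].
        exists U. split; [split; [|exact Hd] | exact Uz].
        destruct (Hl U Ul) as [->|[HU _]]; assumption.
Qed.

Section LiftIntoCompactHausdorff.
Variables (K A B : Top) (f : cmap A B) (i : cmap A K).
Hypotheses (HK : hausdorff K) (Hc : compact K) (Hf : lclass C_T A B f).

Definition cluster (b : B) (k : K) : Prop :=
  forall V : B -> Prop, is_open V -> V b -> forall U : K -> Prop, is_open U -> U k ->
    exists a, V (f a) /\ U (i a).

Lemma cluster_exists (b : B) : exists k, cluster b k.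
Proof.
  apply NNPP. intros Hnone.
  set (S := fun U : K -> Prop => is_open U /\
              exists V, is_open V /\ V b /\ forall a, V (f a) -> U (i a) -> False).
  destruct (Hc S) as [l [Hl Hcl]].
  - intros U [HU _]; exact HU.
  - intros k. apply NNPP. intros Hk. apply Hnone. exists k.
    intros V HV Vb U HU Uk. apply NNPP. intros Hmiss. apply Hk.
    exists U. split; [|exact Uk]. split; [exact HU|].
    exists V. split; [exact HV|]. split; [exact Vb|].
    intros a Va Ua. apply Hmiss. exists a; auto.
  - destruct (open_nbhd_forall_list B (K -> Prop)
                (fun U V => forall a, V (f a) -> U (i a) -> False) b l)
      as [V [HV [Vb HVl]]].
    + intros U V V' Hsub HUV a V'a Ua. exact (HUV a (Hsub _ V'a) Ua).
    + intros U HU. apply (Hl U HU).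
    + destruct (lclass_dense A B f Hf V HV b Vb) as [a Va].
      destruct (Hcl (i a)) as [U [Ul Ua]]. exact (HVl U Ul a Va Ua).
Qed.

Lemma cluster_nbhd (b : B) (k : K) (W : K -> Prop) :
  cluster b k -> is_open W -> W k ->
  exists P, is_open P /\ P b /\ forall a, P (f a) -> W (i a).
Proof.
  intros Hbk HW Wk.
  destruct (compact_hausdorff_regular K HK Hc k W HW Wk)
    as [V [C [HV [HC [Vk [Hd HWC]]]]]].
  destruct (lclass_split_cover A B f Hf (fun a => W (i a)) (fun a => C (i a))
              (cont _ _ i W HW) (cont _ _ i C HC) (fun a => HWC (i a)))
    as [P1 [P2 [HP1 [HP2 [HP [H1 H2]]]]]].
  exists P1. split; [exact HP1|]. split; [|exact H1].
  (* Near [b] the map [i] comes close to [k], hence into [V], which misses [C]. *)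
  destruct (HP b) as [P1b|P2b]; [exact P1b|].
  destruct (Hbk P2 HP2 P2b V HV Vk) as [a [P2a Va]].
  destruct (Hd (i a) Va (H2 a P2a)).
Qed.

Lemma cluster_unique (b : B) (k1 k2 : K) : cluster b k1 -> cluster b k2 -> k1 = k2.
Proof.
  intros H1 H2. apply NNPP. intros Hne.
  destruct (HK k1 k2 Hne) as [U1 [U2 [HU1 [HU2 [U1k [U2k Hdis]]]]]].
  destruct (cluster_nbhd b k1 U1 H1 HU1 U1k) as [P [HP [Pb HPU]]].
  destruct (H2 P HP Pb U2 HU2 U2k) as [a [Pa U2a]].
  exact (Hdis (i a) (HPU a Pa) U2a).
Qed.

Definition lift_fn (b : B) : K :=
  proj1_sig (constructive_indefinite_description _ (cluster_exists b)).

Lemma lift_fn_cluster (b : B) : cluster b (lift_fn b).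
Proof. exact (proj2_sig (constructive_indefinite_description _ (cluster_exists b))). Qed.

Lemma lift_fn_open (W : K -> Prop) : is_open W -> is_open (fun b => W (lift_fn b)).
Proof.
  intros HW. apply open_of_local. intros b Wb.
  destruct (compact_hausdorff_regular K HK Hc (lift_fn b) W HW Wb)
    as [V [C [HV [HC [Vk [Hd HWC]]]]]].
  destruct (cluster_nbhd b (lift_fn b) V (lift_fn_cluster b) HV Vk) as [P [HP [Pb HPV]]].
  exists P. split; [exact HP|]. split; [exact Pb|].
  intros b' Pb'. destruct (HWC (lift_fn b')) as [W'|Cb']; [exact W'|].
  destruct (lift_fn_cluster b' P HP Pb' C HC Cb') as [a [Pa Ca]].
  destruct (Hd (i a) (HPV a Pa) Ca).
Qed.

Definition lift : cmap B K := {| fn := lift_fn; cont := lift_fn_open |}.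

Lemma lift_comp (a : A) : lift (f a) = i a.
Proof.
  apply (cluster_unique (f a)); [apply lift_fn_cluster|].
  intros V HV Va U HU Ua. exists a; split; assumption.
Qed.

End LiftIntoCompactHausdorff.

Lemma ultrafilter_avoiding_cover (T : Type) (S : (T -> Prop) -> Prop) :
  ~ (exists l : list (T -> Prop),
        (forall U, In U l -> S U) /\ (forall x, exists U, In U l /\ U x)) ->
  exists G : set_system T, UltraFilter G /\ forall U, S U -> G (fun x => ~ U x).
Proof.
  intros Hnf.
  set (F := fun Z : T -> Prop => exists l : list (T -> Prop),
              (forall U, In U l -> S U) /\ forall x, (forall U, In U l -> ~ U x) -> Z x).
  assert (HF : ProperFilter F).
  { split; [|split].
    - intros [l [Hl Hl0]]. apply Hnf. exists l. split; [exact Hl|].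
      intros x. apply NNPP. intros Hx. apply (Hl0 x). intros U HU Ux. apply Hx. eauto.
    - exists nil. split; [intros U []|]. intros x _. exact I.
    - intros Z1 Z2 [l1 [Hl1 HZ1]] [l2 [Hl2 HZ2]]. exists (l1 ++ l2). split.
      + intros U HU. apply in_app_or in HU as [HU|HU]; auto.
      + intros x Hx. split; [apply HZ1 | apply HZ2];
          intros U HU; apply Hx; apply in_or_app; auto.
    - intros Z1 Z2 Hsub [l [Hl HZ]]. exists l. split; [exact Hl|].
      intros x Hx. apply Hsub, HZ, Hx. }
  destruct (ultraFilterLemma HF) as [G [HG HFG]].
  exists G. split; [exact HG|]. intros U SU. apply HFG.
  exists (U :: nil). split; [intros V [<-|[]]; exact SU|].
  intros x Hx. apply Hx. left; reflexivity.
Qed.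

Section AdjoinUltrafilterPoint.
Variables (K : Top) (G : set_system K).
Hypothesis HG : UltraFilter G.

(* [None] is the new point; its neighbourhoods are the sets whose trace on [K] is in [G]. *)
Definition adjoin_ultra : Top.
Proof.
  refine {| carrier := option K;
            is_open := fun U => is_open (fun x => U (Some x)) /\
                                (U None -> G (fun x => U (Some x))) |}.
  - intros U V [HU HUN] E. split.
    + apply (open_ext _ _ _ HU). intros x; apply E.
    + intros VN. apply (filterS (P := fun x => U (Some x))); [intros x; apply E|].
      apply HUN, E, VN.
  - split; [apply open_full | intros _; exact filterT].
  - intros U V [HU HUN] [HV HVN]. split; [apply (open_inter _ _ _ HU HV)|].
    intros [UN VN]. exact (filterI (HUN UN) (HVN VN)).
  - intros S HS. split.
    + apply (open_ext _ (fun x => exists V,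
               (fun V : K -> Prop => exists U, S U /\ forall y, V y <-> U (Some y)) V /\ V x)).
      * apply open_union. intros V [U [SU E]].
        apply (open_ext _ _ _ (proj1 (HS U SU))). intros y. symmetry; apply E.
      * intros x. split.
        -- intros [V [[U [SU E]] Vx]]. exists U. split; [exact SU | apply E, Vx].
        -- intros [U [SU Ux]]. exists (fun y => U (Some y)).
           split; [exists U; split; [exact SU | reflexivity] | exact Ux].
    + intros [U [SU UN]]. apply (filterS (P := fun x => U (Some x))).
      * intros x Ux. exists U; auto.
      * apply (proj2 (HS U SU) UN).
Defined.

Definition adjoin_ultra_incl : cmap K adjoin_ultra.
Proof. refine {| fn := (Some : K -> adjoin_ultra) |}. intros U [HU _]. exact HU. Defined.

Lemma adjoin_ultra_limit (X : Top) (h : cmap adjoin_ultra X) (U : X -> Prop) :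
  is_open U -> U (h None) -> G (fun x => U (h (Some x))).
Proof. intros HU Uh. exact (proj2 (cont _ _ h U HU) Uh). Qed.

Lemma adjoin_ultra_incl_llp_adisc : llp adjoin_ultra_incl (to_pt adisc).
Proof.
  intros i j _.
  exists (adisc_map adjoin_ultra (fun o => match o with Some x => i x | None => ta end)).
  split; [reflexivity | intros o; destruct (fn j o); reflexivity].
Qed.

Lemma adjoin_ultra_incl_llp_sierp : llp adjoin_ultra_incl (to_pt sierp).
Proof.
  intros i j _.
  set (g := fun o => match o with Some x => i x | None => tb end).
  assert (Hg : @is_open adjoin_ultra (fun o => g o = ta)).
  { split; [apply (cont _ _ i (fun t => t = ta)); intros _; reflexivity | discriminate]. }
  exists (sierp_map adjoin_ultra g Hg).
  split; [reflexivity | intros o; destruct (fn j o); reflexivity].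
Qed.

Lemma adjoin_ultra_incl_llp_incl_b : llp adjoin_ultra_incl incl_b.
Proof.
  intros i j Hsq. exists (to_pt adjoin_ultra). split.
  - intros x. destruct (fn i x). reflexivity.
  - intros [x|]; [exact (Hsq x)|]. simpl.
    destruct (fn j None) eqn:E; [exfalso | reflexivity].
    apply (filter_not_empty G).
    apply (filterS (P := fun x => j (Some x) = ta)).
    + intros x Ex. specialize (Hsq x). simpl in Hsq. congruence.
    + apply (adjoin_ultra_limit sierp j (fun t => t = ta)); [discriminate | exact E].
Qed.

Lemma adjoin_ultra_incl_llp_vspace : llp adjoin_ultra_incl (to_pt vspace).
Proof.
  intros i j _.
  (* The ultrafilter decides on which side of the cover of [vspace] the new point lies. *)
  set (top := if excluded_middle_informative (G (fun x => i x <> pb)) then pa else pb).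
  set (g := fun o => match o with Some x => i x | None => top end).
  assert (Hpa : @is_open adjoin_ultra (fun o => g o <> pb)).
  { split; [apply (cont _ _ i (fun t => t <> pb)); intros _; discriminate|].
    simpl; unfold top. destruct (excluded_middle_informative (G (fun x => i x <> pb)));
      [auto | contradiction]. }
  assert (Hpb : @is_open adjoin_ultra (fun o => g o <> pa)).
  { split; [apply (cont _ _ i (fun t => t <> pa)); intros _; discriminate|].
    simpl; unfold top. destruct (excluded_middle_informative (G (fun x => i x <> pb)));
      [contradiction | intros _].
    destruct (in_ultra_setVsetC (fun x => i x <> pb) HG) as [Hin|Hout]; [contradiction|].
    apply (filterS (P := fun x => ~ i x <> pb)); [|exact Hout].
    intros x Hx E. apply Hx. rewrite E. discriminate. }
  exists (vspace_map adjoin_ultra g Hpa Hpb).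
  split; [reflexivity | intros o; destruct (fn j o); reflexivity].
Qed.

Lemma adjoin_ultra_incl_lclass : lclass C_T K adjoin_ultra adjoin_ultra_incl.
Proof.
  intros X Y g []; auto using adjoin_ultra_incl_llp_adisc, adjoin_ultra_incl_llp_sierp,
    adjoin_ultra_incl_llp_incl_b, adjoin_ultra_incl_llp_vspace.
Qed.

End AdjoinUltrafilterPoint.

Theorem claim1 (K : Top) (HK : hausdorff K) :
  compact K <-> lrclass C_T K pt (to_pt K).
Proof.
  split.
  - intros Hc A B f Hf i j _. exists (lift K A B f i HK Hc Hf). split.
    + apply lift_comp.
    + intros b. destruct (fn j b). reflexivity.
  - intros Hlr S HS Hcov. apply NNPP. intros Hnf.
    destruct (ultrafilter_avoiding_cover K S Hnf) as [G [HG HGS]].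
    destruct (Hlr _ _ _ (adjoin_ultra_incl_lclass K G HG) (cmap_id K) (to_pt _)
                (fun _ => eq_refl)) as [h [Hh _]].
    destruct (Hcov (h None)) as [U [SU Uh]].
    assert (GU : G U).
    { apply (filterS (P := fun x => U (h (Some x)))).
      - intros x Ux. specialize (Hh x). simpl in Hh. rewrite Hh in Ux. exact Ux.
      - exact (adjoin_ultra_limit K G HG K h U (HS U SU) Uh). }
    apply (filter_not_empty G). apply (filterS (P := fun x => U x /\ ~ U x)).
    + intros x [Ux nUx]. contradiction.
    + exact (filterI GU (HGS U SU)).
Qed.
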